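(* Let $\Lambda\subseteq\mathbb{Z}^n$ be an antichain lattice and $A$ a generic $\Lambda$-finite set. Then for each $i$, $N_i(A)$ is a $\Lambda$-finite set under the action $N_i(A)\times\Lambda\to N_i(A)$, $(\sigma,\lambda)\mapsto\sigma+\lambda$; i.e. $N_i(A)+\Lambda=N_i(A)$ and $N_i(A)$ consists of finitely many $\Lambda$-orbits.
   Context: Notation: $\le,\ll,\vee$ componentwise on $\mathbb{Z}^n$; an antichain lattice is a subgroup of $\mathbb{Z}^n$ whose distinct elements are pairwise incomparable. $T_\eta=\eta-\mathbb{N}^n$, $T^o_\eta=\{\beta:\beta\ll\eta\}$; the $X$-face ($\emptyset\ne X\subseteq[n]$) of $T_\eta$ is $\{\alpha\in T_\eta:\alpha_i=\eta_i\ \forall i\in X\}$. $A$ is generic if whenever $T^o_\eta\cap A=\emptyset$, each face of $T_\eta$ contains at most one point of $A$. $A$ is $\Lambda$-finite if $A=A+\Lambda$ and there is a finite $A_0\subseteq A$ with $A=A_0+\Lambda$. $N_i(A)$ is the set of strongly neighborly subsets $\sigma\subseteq A$ with $|\sigma|=i+1$, where $\sigma$ is strongly neighborly if $\sigma'\subseteq A$, $\vee\sigma'=\vee\sigma$ imply $\sigma'=\sigma$; $\sigma+\lambda=\{\alpha+\lambda:\alpha\in\sigma\}$. *)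

From HB Require Import structures.
From mathcomp Require Import all_boot all_order all_algebra.
From mathcomp Require Export finmap.
Set Implicit Arguments.
Unset Strict Implicit.
Unset Printing Implicit Defensive.
Import Order.TTheory GRing.Theory Num.Theory.
Local Open Scope fset_scope.
Local Open Scope ring_scope.

Definition pt (n : nat) := {ffun 'I_n -> int}.

Definition ptle n (x y : pt n) : Prop := forall j, x j <= y j.
Definition ptlt n (x y : pt n) : Prop := forall j, x j < y j.

(* join (componentwise max) of a finite set; meaningful for nonempty s
   (the default value is an element of s, so idempotence of max makes it exact). *)
Definition vee n (s : {fset pt n}) : pt n :=
  [ffun j => \big[Order.max/(head (0 : pt n) (enum_fset s)) j]_(x <- enum_fset s) x j].

Definition antichain_lattice n (L : pt n -> Prop) : Prop :=
  L 0 /\ (forall x y, L x -> L y -> L (x - y)) /\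
  (forall x y, L x -> L y -> ptle x y -> x = y).

Definition L_finite n (L : pt n -> Prop) (A : pt n -> Prop) : Prop :=
  (forall a l, A a -> L l -> A (a + l)) /\
  (exists A0 : {fset pt n}, (forall a, a \in A0 -> A a) /\
     forall a, A a -> exists2 a0, a0 \in A0 & exists2 l, L l & a = a0 + l).

Definition face n (eta : pt n) (X : {set 'I_n}) (a : pt n) : Prop :=
  ptle a eta /\ forall i, i \in X -> a i = eta i.

Definition generic n (A : pt n -> Prop) : Prop :=
  forall eta : pt n,
    (forall b, ptlt b eta -> ~ A b) ->
    forall X : {set 'I_n}, X != set0 ->
      forall a b, A a -> A b -> face eta X a -> face eta X b -> a = b.

Definition strongly_neighborly n (A : pt n -> Prop) (s : {fset pt n}) : Prop :=
  (forall a, a \in s -> A a) /\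
  forall s' : {fset pt n}, s' != fset0 -> (forall a, a \in s' -> A a) ->
    vee s' = vee s -> s' = s.

Definition N_ n (i : nat) (A : pt n -> Prop) (s : {fset pt n}) : Prop :=
  strongly_neighborly A s /\ #|` s| = i.+1.

Definition ftranslate n (s : {fset pt n}) (l : pt n) : {fset pt n} :=
  [fset x + l | x in s].

From HB Require Import structures.
From mathcomp Require Import all_boot all_order all_algebra.
From mathcomp Require Import finmap zify boolp.
Import Order.TTheory GRing.Theory Num.Theory.
Local Open Scope fset_scope.
Local Open Scope ring_scope.
Set Implicit Arguments.
Unset Strict Implicit.

(* A strongly neighborly set contains every point of A lying below its join.
   Hence for fixed a the points b sharing some s in N_i(A) with a form a finite
   set: otherwise a Dickson-type extraction yields b_0, ..., b_(i+1) among them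
   with b_k <= max(a, b_(i+1)) componentwise, and all i+2 of them would lie in a
   set of size i+1 containing a and b_(i+1).  Translating each s in N_i(A) so
   that it meets the finite set of representatives of A places it among the
   subsets of one finite set. *)

Section NondecreasingSubsequences.
Local Open Scope nat_scope.

Lemma tail_argmin (f : nat -> nat) i :
  exists j, i <= j /\ forall k, i <= k -> f j <= f k.
Proof.
have ex_val : exists v, `[< exists2 j, i <= j & f j = v >].
  by exists (f i); apply/asboolP; exists i.
case: (ex_minnP ex_val) => v /asboolP [j ij <-] min_v.
by exists j; split=> // k ik; apply: min_v; apply/asboolP; exists k.
Qed.

Lemma nondecreasing_subseq (f : nat -> nat) :
  exists phi : nat -> nat,
    {homo phi : k k' / k < k'} /\ {homo f \o phi : k k' / k <= k'}.
Proof.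
have [m m_spec] := choice (tail_argmin f).
pose start k := iter k (fun y => (m y).+1) 0.
have start_le k : start k <= m (start k) by case: (m_spec (start k)).
exists (m \o start); split.
  by apply: homo_ltn ltn_trans _ => k /=; apply: (start_le k.+1).
apply: homo_leq leqnn leq_trans _ => k /=; apply: (m_spec (start k)).2.
exact: leq_trans (start_le k) (leq_trans (leqnSn _) (start_le k.+1)).
Qed.

Lemma simultaneous_nondecreasing_subseq (I : eqType) (F : I -> nat -> nat)
    (r : seq I) :
  exists phi : nat -> nat, {homo phi : k k' / k < k'} /\
    forall i, i \in r -> {homo F i \o phi : k k' / k <= k'}.
Proof.
elim: r => [|a r [phi [phi_incr F_phi]]]; first by exists id; split.
have [psi [psi_incr Fa_psi]] := nondecreasing_subseq (F a \o phi).
exists (phi \o psi); split=> [k k' lt_kk'|i]; first exact/phi_incr/psi_incr.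
rewrite in_cons => /predU1P [-> //|ir] k k' le_kk'.
exact/(F_phi i ir)/(ltnW_homo psi_incr).
Qed.

End NondecreasingSubsequences.

(* Splitting an integer into two natural numbers makes nondecreasing
   subsequences available coordinatewise. *)
Definition pos_part (x : int) : nat := if 0 <= x then absz x else 0%N.
Definition neg_part (x : int) : nat := if x < 0 then absz x else 0%N.

Lemma le_max_of_parts (a x y : int) :
  (pos_part (x - a) <= pos_part (y - a))%N ->
  (neg_part (x - a) <= neg_part (y - a))%N -> x <= Num.max a y.
Proof.
rewrite le_max /pos_part /neg_part.
case: (lerP 0 (x - a)) => hx; case: (lerP 0 (y - a)) => hy;
  rewrite ?ltNge ?hx ?hy /= => ? ?; apply/orP; lia.
Qed.

Lemma dominated_subseq n (a : pt n) (b : nat -> pt n) :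
  exists phi : nat -> nat, {homo phi : k k' / (k < k')%N} /\
    forall k k' j, (k <= k')%N -> b (phi k) j <= Num.max (a j) (b (phi k') j).
Proof.
pose F (p : 'I_n * bool) k := (if p.2 then pos_part else neg_part) (b k p.1 - a p.1).
have [phi [phi_incr F_phi]] :=
  simultaneous_nondecreasing_subseq F (enum {: 'I_n * bool}).
exists phi; split=> // k k' j le_kk'; apply: le_max_of_parts.
- exact: (F_phi (j, true)) (mem_enum _ _) _ _ le_kk'.
- exact: (F_phi (j, false)) (mem_enum _ _) _ _ le_kk'.
Qed.

Section Join.
Variable n : nat.
Implicit Types (x y v w l : pt n) (s : {fset pt n}).

Lemma ptle_anti x y : ptle x y -> ptle y x -> x = y.
Proof. by move=> xy yx; apply/ffunP => j; apply/le_anti; rewrite xy yx. Qed.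

Lemma ptleBlDr x y l : ptle (x - l) y <-> ptle x (y + l).
Proof. by split=> le_xy j; have := le_xy j; rewrite !ffunE lerBlDr. Qed.

Lemma ptleBrDr x y l : ptle x (y - l) <-> ptle (x + l) y.
Proof. by split=> le_xy j; have := le_xy j; rewrite !ffunE lerBrDr. Qed.

Lemma vee_ub s x : x \in s -> ptle x (vee s).
Proof.
move=> xs j; rewrite ffunE.
exact: (@le_bigmax_seq _ _ _ _ _ x xpredT (fun y : pt n => y j)).
Qed.

Lemma vee_least s w : s != fset0 ->
  (forall x, x \in s -> ptle x w) -> ptle (vee s) w.
Proof.
move=> /fset0Pn [x0 x0s] ub_w j; rewrite ffunE big_seq.
have head_s : head 0 (enum_fset s) \in enum_fset s.
  move: x0s; rewrite -[x0 \in s]/(x0 \in enum_fset s).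
  by case: enum_fset => //= *; rewrite mem_head.
by apply: bigmax_le => [|x xs]; apply: ub_w.
Qed.

Lemma vee_unique s v : s != fset0 -> (forall x, x \in s -> ptle x v) ->
  (forall w, (forall x, x \in s -> ptle x w) -> ptle v w) -> vee s = v.
Proof.
by move=> s0 ub_v least_v; apply: ptle_anti; [apply: vee_least|apply/least_v/vee_ub].
Qed.

Lemma mem_ftranslate s l y : (y \in ftranslate s l) = (y - l \in s).
Proof.
apply/imfsetP/idP => [[x xs ->]|ys]; first by rewrite addrK.
by exists (y - l); rewrite ?subrK.
Qed.

Lemma ftranslateK s l : ftranslate (ftranslate s l) (- l) = s.
Proof. by apply/fsetP => y; rewrite !mem_ftranslate opprK addrK. Qed.

Lemma ftranslateNK s l : ftranslate (ftranslate s (- l)) l = s.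
Proof. by rewrite -{2}[l]opprK ftranslateK. Qed.

Lemma card_ftranslate s l : #|` ftranslate s l| = #|` s|.
Proof. by rewrite card_imfset //; apply: addIr. Qed.

Lemma ftranslate_eq0 s l : (ftranslate s l == fset0) = (s == fset0).
Proof. by rewrite -!cardfs_eq0 card_ftranslate. Qed.

Lemma vee_ftranslate s l : s != fset0 -> vee (ftranslate s l) = vee s + l.
Proof.
move=> s0; apply: vee_unique; first by rewrite ftranslate_eq0.
  by move=> x; rewrite mem_ftranslate => /vee_ub /ptleBlDr.
move=> w ub_w; apply/ptleBrDr/vee_least => // x xs; apply/ptleBrDr/ub_w.
by rewrite mem_ftranslate addrK.
Qed.

End Join.

Section FiniteSets.
Variable T : choiceType.

Definition is_finite (P : T -> Prop) := exists B : {fset T}, forall x, P x -> x \in B.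

Lemma infinite_injective (P : T -> Prop) :
  ~ is_finite P -> exists2 b : nat -> T, forall k, P (b k) & injective b.
Proof.
move=> infP.
have [h hP] : {h : {fset T} -> T & forall B, P (h B) /\ h B \notin B}.
  apply: (@choice _ _ (fun B x => P x /\ x \notin B)) => B.
  apply: contra_notP infP => noX; exists B => x Px.
  by apply: contrapT => /negP xB; apply: noX; exists x.
pose prefix k := iter k (fun B => h B |` B) fset0.
have mem_prefix k k' : (k < k')%N -> h (prefix k) \in prefix k'.
  elim: k' => // k' IH; rewrite ltnS leq_eqVlt /= in_fset1U.
  by case/predU1P => [->|/IH ->]; rewrite ?eqxx ?orbT.
exists (fun k => h (prefix k)) => [k|k k' eq_h]; first exact: (hP _).1.
case: (ltngtP k k') => // [/mem_prefix|/mem_prefix].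
  by rewrite eq_h (negPf (hP _).2).
by rewrite -eq_h (negPf (hP _).2).
Qed.

Lemma is_finite_bigcup (I : eqType) (P : I -> T -> Prop) (r : seq I) :
  (forall i, i \in r -> is_finite (P i)) ->
  is_finite (fun x => exists2 i, i \in r & P i x).
Proof.
elim: r => [_|a r IH fin_P]; first by exists fset0 => x [].
have [Ba Pa_Ba] := fin_P a (mem_head a r).
have [B P_B] : is_finite (fun x => exists2 i, i \in r & P i x).
  by apply: IH => i ir; apply: fin_P; rewrite in_cons ir orbT.
exists (Ba `|` B) => x [i]; rewrite in_fsetU in_cons => /predU1P [->|ir] Pix.
  by rewrite Pa_Ba.
by rewrite P_B ?orbT //; exists i.
Qed.

End FiniteSets.

Section StronglyNeighborly.
Variables (n : nat) (A : pt n -> Prop).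
Implicit Types (s : {fset pt n}) (a b l : pt n).

Lemma strongly_neighborly_below s b : strongly_neighborly A s -> s != fset0 ->
  A b -> ptle b (vee s) -> b \in s.
Proof.
move=> [sA s_min] s0 Ab le_b.
have bs0 : b |` s != fset0 by apply/fset0Pn; exists b; rewrite fset1U1.
suff <- : b |` s = s by rewrite fset1U1.
apply: s_min => // [a|]; first by rewrite in_fset1U => /predU1P [->|/sA].
apply: vee_unique => // [x|w ub_w].
  by rewrite in_fset1U => /predU1P [->|/vee_ub].
by apply: vee_least => // x xs; apply: ub_w; rewrite in_fset1U xs orbT.
Qed.

Lemma strongly_neighborly_ftranslate s l :
  (forall a, A a -> A (a + l)) -> (forall a, A a -> A (a - l)) ->
  s != fset0 -> strongly_neighborly A s -> strongly_neighborly A (ftranslate s l).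
Proof.
move=> A_addl A_subl s0 [sA s_min]; split.
  by move=> a; rewrite mem_ftranslate => /sA /A_addl; rewrite subrK.
move=> s' s'0 s'A vee_s'.
suff <- : ftranslate s' (- l) = s by rewrite ftranslateNK.
apply: s_min; first by rewrite ftranslate_eq0.
  by move=> a; rewrite mem_ftranslate opprK => /s'A /A_subl; rewrite addrK.
by rewrite vee_ftranslate // vee_s' vee_ftranslate // addrK.
Qed.

Lemma N_ftranslate i s l :
  (forall a, A a -> A (a + l)) -> (forall a, A a -> A (a - l)) ->
  N_ i A s -> N_ i A (ftranslate s l).
Proof.
move=> A_addl A_subl [sn card_s]; split; last by rewrite card_ftranslate.
by apply: strongly_neighborly_ftranslate; rewrite // -cardfs_gt0 card_s.
Qed.

Definition N_partner i a b := exists s, N_ i A s /\ a \in s /\ b \in s.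

Lemma N_partner_finite i a : is_finite (N_partner i a).
Proof.
apply: contrapT => /infinite_injective [b partner_b b_inj].
have [phi [phi_incr dominated]] := dominated_subseq a b.
have [s [[sn card_s] [a_s b_s]]] := partner_b (phi i.+1).
have s0 : s != fset0 by rewrite -cardfs_gt0 card_s.
have sub : {subset [seq b (phi k) | k <- iota 0 i.+2] <= enum_fset s}.
  move=> x /mapP [k]; rewrite mem_iota add0n ltnS => le_k ->.
  apply: (strongly_neighborly_below sn s0).
    by have [t [[[tA _] _] [_ b_t]]] := partner_b (phi k); apply: tA.
  move=> j; apply: le_trans (dominated _ _ j le_k) _.
  by rewrite ge_max !vee_ub.
have := uniq_leq_size _ sub; rewrite size_map size_iota -/(#|` s|) card_s ltnn.
rewrite map_inj_uniq ?iota_uniq => [/(_ isT) //|k k' /b_inj].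
exact/incn_inj/leq_mono.
Qed.

End StronglyNeighborly.

Theorem mainTheorem6 (n : nat) (L : pt n -> Prop) (A : pt n -> Prop) :
  antichain_lattice L -> generic A -> L_finite L A ->
  forall i : nat,
    (forall s l, N_ i A s -> L l -> N_ i A (ftranslate s l)) /\
    (exists F : seq {fset pt n},
        (forall t, t \in F -> N_ i A t) /\
        forall s, N_ i A s -> exists2 t, t \in F & exists2 l, L l & s = ftranslate t l).
Proof.
move=> [L0 [L_sub _]] _ [A_add [A0 [A0A A0_cover]]] i.
have L_opp l : L l -> L (- l) by move/(L_sub _ _ L0); rewrite sub0r.
have N_tr s l : N_ i A s -> L l -> N_ i A (ftranslate s l).
  by move=> Ns Ll; apply: N_ftranslate Ns => a Aa; apply: A_add => //; apply: L_opp.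
split=> //.
have [B B_partners] :
    is_finite (fun b => exists2 a0, a0 \in enum_fset A0 & N_partner A i a0 b).
  by apply: is_finite_bigcup => a0 _; apply: N_partner_finite.
exists [seq t <- enum_fset (fpowerset B) | `[< N_ i A t >]]; split.
  by move=> t; rewrite mem_filter => /andP [/asboolP].
move=> s Ns; have /fset0Pn [a a_s] : s != fset0 by rewrite -cardfs_gt0 Ns.2.
have [a0 a0_A0 [l Ll a_eq]] := A0_cover a (Ns.1.1 a a_s).
exists (ftranslate s (- l)); last by exists l; rewrite ?ftranslateNK.
rewrite mem_filter fpowersetE; apply/andP; split; first exact/asboolP/N_tr/L_opp.
apply/fsubsetP => b b_t; apply: B_partners; exists a0 => //.
exists (ftranslate s (- l)); split; [exact/N_tr/L_opp | split=> //].
by rewrite mem_ftranslate opprK -a_eq.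
Qed.
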